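(* Let $\Omega$ be a finite set and let $\mathcal{F}_{+}$ denote the set of nonnegative, increasing set functions $f:2^{\Omega}\to\mathbb{R}$. Let $\zeta:\mathcal{F}_{+}\to\mathbb{R}$ be any one of the following: (I) $\zeta[f]=\mathcal{E}[f]$; (II) $\zeta[f]=D[f]$; (III) $\zeta[f]=d^{\ell,k}[f]$ for some fixed $\ell\in\{0,\dots,|\Omega|-1\}$, $k\in\{0,\dots,|\Omega|\}$; (IV) $\zeta[f]=\Delta^{L,K}[f]$ for some fixed $L\in\{0,\dots,|\Omega|-1\}$, $K\in\{1,\dots,|\Omega|\}$. Then: (i) $\zeta$ is sublinear: for all $f_1,f_2\in\mathcal{F}_{+}$, $\zeta[f_1]+\zeta[f_2]\ge\zeta[f_1+f_2]$, and for all $f\in\mathcal{F}_{+}$ and $\alpha\in\mathbb{R}_{+}$, $\alpha\zeta[f]=\zeta[\alpha f]$. (ii) In cases (I), (II), (III): if $f\in\mathcal{F}_{+}$ is not submodular, then for any $\epsilon\in[0,\zeta[f])$ there does not exist a nonnegative, increasing, submodular function $g:2^{\Omega}\to\mathbb{R}$ with $\|g-f\|_{\infty}<\epsilon/4$.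
   Context: A set function $f$ is increasing if $f(\mathcal{A})\le f(\mathcal{B})$ whenever $\mathcal{A}\subseteq\mathcal{B}$; it is submodular if $f(\mathcal{A}\cup\mathcal{B})+f(\mathcal{A}\cap\mathcal{B})\le f(\mathcal{A})+f(\mathcal{B})$ for all $\mathcal{A},\mathcal{B}\subseteq\Omega$. Definitions: $\mathcal{E}[f]=\max_{\mathcal{A},\mathcal{B}\subseteq\Omega} f(\mathcal{A}\cup\mathcal{B})+f(\mathcal{A}\cap\mathcal{B})-f(\mathcal{A})-f(\mathcal{B})$. For $\ell\in\{0,\dots,|\Omega|-1\}$, $k\in\{0,\dots,|\Omega|\}$, $d^{\ell,k}[f]=\max\{f(\mathcal{A}\cup\mathcal{B}\cup\{s\})-f(\mathcal{A}\cup\mathcal{B})-f(\mathcal{A}\cup\{s\})+f(\mathcal{A}) : \mathcal{A},\mathcal{B}\subseteq\Omega, s\in\Omega, |\mathcal{A}|=\ell,|\mathcal{B}|=k\}$. $D[f]=\max\{d^{\ell,k}[f]:\ell\in\{0,\dots,|\Omega|-1\},k\in\{0,\dots,|\Omega|\}\}$. For $K\in\{1,\dots,|\Omega|\}$, $\delta^{\ell,K}[f]=\sum_{k=0}^{K-1}d^{\ell,k}[f]$, and $\Delta^{L,K}[f]=\max_{\ell\in\{0,\dots,L\}}\delta^{\ell,K}[f]$. $\|h\|_\infty=\max_{\mathcal{S}\subseteq\Omega}|h(\mathcal{S})|$. *)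

From HB Require Import structures.
From mathcomp Require Import all_boot all_order all_algebra.
From mathcomp Require Import reals.
Set Implicit Arguments. Unset Strict Implicit. Unset Printing Implicit Defensive.
Import Order.TTheory GRing.Theory Num.Theory.
Local Open Scope ring_scope.

Section SetFun.
Variables (R : realType) (T : finType).

Definition setfun := {set T} -> R.

(* maximum of F over the (finite) index set {i | P i}; 0 if that set is empty
   (this default is only used for empty index sets). *)
Definition fmax (I : finType) (P : pred I) (F : I -> R) : R :=
  match [pick i | P i] with
  | Some i0 => \big[Num.max/F i0]_(i | P i) F i
  | None => 0
  end.

Definition nonnegf (f : setfun) : Prop := forall S, 0 <= f S.
Definition increasing (f : setfun) : Prop :=
  forall A B : {set T}, A \subset B -> f A <= f B.
Definition submodular (f : setfun) : Prop :=
  forall A B : {set T}, f (A :|: B) + f (A :&: B) <= f A + f B.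

Definition Emod (f : setfun) : R :=
  fmax (fun _ : {set T} * {set T} => true)
       (fun p => f (p.1 :|: p.2) + f (p.1 :&: p.2) - f p.1 - f p.2).

Definition dlk (l k : nat) (f : setfun) : R :=
  fmax (fun p : {set T} * {set T} * T => (#|p.1.1| == l) && (#|p.1.2| == k))
       (fun p => let: (A, B, s) := p in
          f (A :|: B :|: [set s]) - f (A :|: B) - f (A :|: [set s]) + f A).

Definition Dmax (f : setfun) : R :=
  fmax (fun _ : 'I_#|T| * 'I_#|T|.+1 => true)
       (fun p => dlk p.1 p.2 f).

Definition deltalK (l K : nat) (f : setfun) : R :=
  \sum_(k < K) dlk l k f.

Definition DeltaLK (L K : nat) (f : setfun) : R :=
  fmax (fun _ : 'I_L.+1 => true) (fun l => deltalK l K f).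

Definition supnorm (h : setfun) : R :=
  fmax (fun _ : {set T} => true) (fun S => `|h S|).

End SetFun.

Inductive zeta_choice :=
  | ZE
  | ZD
  | Zd of nat & nat
  | ZDelta of nat & nat.

Definition zeta_valid (T : finType) (z : zeta_choice) : Prop :=
  match z with
  | ZE | ZD => True
  | Zd l k => (l < #|T|)%N /\ (k <= #|T|)%N
  | ZDelta L K => (L < #|T|)%N /\ (1 <= K)%N /\ (K <= #|T|)%N
  end.

Definition zeta (R : realType) (T : finType) (z : zeta_choice)
  (f : {set T} -> R) : R :=
  match z with
  | ZE => Emod f
  | ZD => Dmax f
  | Zd l k => dlk l k f
  | ZDelta L K => DeltaLK L K f
  end.

Definition not_Delta (z : zeta_choice) : Prop :=
  match z with ZDelta _ _ => False | _ => True end.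

(* Each zeta is built from functionals that are linear in f by taking maxima
   and finite sums, both of which preserve sublinearity.  For (ii), every
   functional maximised in E[f] and d^{l,k}[f] has four coefficients +-1 and is
   nonpositive on a submodular increasing g (for d^{l,k} this is the
   diminishing-returns property), so its value at f is at most
   4 |g - f|_oo; hence zeta[f] <= 4 |g - f|_oo < eps.  Neither the
   nonnegativity nor the monotonicity of f, nor its non-submodularity, nor
   the ranges of the indices l, k, L, K are needed. *)
From HB Require Import structures.
From mathcomp Require Import all_boot all_order all_algebra.
From mathcomp Require Import reals.
From mathcomp Require Import lra ring.
Import Order.TTheory GRing.Theory Num.Theory.
Set Implicit Arguments. Unset Strict Implicit.
Local Open Scope ring_scope.

Section FiniteMax.
Variables (R : realType) (I : finType) (P : pred I).
Implicit Types F G H : I -> R.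

Lemma le_fmax F i : P i -> F i <= fmax P F.
Proof.
move=> Pi; rewrite /fmax; case: pickP => [i0 Pi0|]; last by move/(_ i); rewrite Pi.
by rewrite (bigD1 i) //= le_max lexx.
Qed.

Lemma eq_fmax F G : (forall i, P i -> F i = G i) -> fmax P F = fmax P G.
Proof.
move=> FG; rewrite /fmax; case: pickP => // i0 Pi0.
by rewrite FG // (eq_bigr _ FG).
Qed.

Lemma fmaxP F :
  (exists2 i, P i & fmax P F = F i) \/ ((forall i, ~~ P i) /\ fmax P F = 0).
Proof.
rewrite /fmax; case: pickP => [i0 Pi0|nP]; last by right; split=> // i; rewrite nP.
left; apply: (big_ind (fun x => exists2 i, P i & x = F i)) => [|x y|i Pi].
- by exists i0.
- by move=> [i Pi ->] [j Pj ->]; case: leP => _; [exists j | exists i].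
- by exists i.
Qed.

Lemma fmax_le F c : 0 <= c -> (forall i, P i -> F i <= c) -> fmax P F <= c.
Proof. by move=> c0 Fc; case: (fmaxP F) => [[i Pi ->]|[_ ->]] //; apply: Fc. Qed.

Lemma fmax_subadditive F G H :
  (forall i, P i -> H i <= F i + G i) -> fmax P H <= fmax P F + fmax P G.
Proof.
move=> HFG; case: (fmaxP H) => [[i Pi ->]|[nP ->]].
  by apply: le_trans (HFG _ Pi) _; apply: lerD; apply: le_fmax.
have fmax0 (K : I -> R) : fmax P K = 0.
  by case: (fmaxP K) => [[i Pi _]|[_ //]]; move: (nP i); rewrite Pi.
by rewrite !fmax0 addr0.
Qed.

Lemma mulr_fmax F a : 0 <= a -> a * fmax P F = fmax P (fun i => a * F i).
Proof.
move=> a0; case: (fmaxP F) => [[i Pi Fi]|[nP ->]]; last first.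
  case: (fmaxP (fun i => a * F i)) => [[j Pj _]|[_ ->]]; last by rewrite mulr0.
  by move: (nP j); rewrite Pj.
rewrite Fi; apply/eqP; rewrite eq_le (le_fmax (fun i => a * F i)) //=.
case: (fmaxP (fun i => a * F i)) => [[j Pj ->]|[nP _]]; last by move: (nP i); rewrite Pi.
by rewrite ler_wpM2l // -Fi; apply: le_fmax.
Qed.

End FiniteMax.

Section Sublinear.
Variables (R : realType) (T : finType).
Implicit Types f g : {set T} -> R.

Definition sublinear (phi : ({set T} -> R) -> R) : Prop :=
  (forall f1 f2, phi (fun S => f1 S + f2 S) <= phi f1 + phi f2) /\
  (forall f a, 0 <= a -> a * phi f = phi (fun S => a * f S)).

Lemma fmax_sublinear (I : finType) (P : pred I) phi :
  (forall i, P i -> sublinear (phi i)) -> sublinear (fun f => fmax P (phi^~ f)).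
Proof.
move=> phiP; split=> [f1 f2|f a a0].
  by apply: fmax_subadditive => i /phiP[+ _]; apply.
by rewrite mulr_fmax //; apply: eq_fmax => i /phiP[_ ->].
Qed.

Lemma sum_sublinear (n : nat) (phi : 'I_n -> ({set T} -> R) -> R) :
  (forall i, sublinear (phi i)) -> sublinear (fun f => \sum_(i < n) phi i f).
Proof.
move=> phiP; split=> [f1 f2|f a a0].
  by rewrite -big_split; apply: ler_sum => i _; case: (phiP i) => + _; apply.
by rewrite mulr_sumr; apply: eq_bigr => i _; case: (phiP i) => _ ->.
Qed.

Lemma Emod_sublinear : sublinear (@Emod R T).
Proof. by apply: fmax_sublinear => -[A B] _; split=> [f1 f2|f a _] /=; [lra|ring]. Qed.

Lemma dlk_sublinear l k : sublinear (@dlk R T l k).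
Proof. by apply: fmax_sublinear => -[[A B] s] _; split=> [f1 f2|f a _] /=; [lra|ring]. Qed.

Lemma Dmax_sublinear : sublinear (@Dmax R T).
Proof. by apply: fmax_sublinear => lk _; apply: dlk_sublinear. Qed.

Lemma deltalK_sublinear l K : sublinear (@deltalK R T l K).
Proof. by apply: sum_sublinear => k; apply: dlk_sublinear. Qed.

Lemma DeltaLK_sublinear L K : sublinear (@DeltaLK R T L K).
Proof. by apply: fmax_sublinear => l _; apply: deltalK_sublinear. Qed.

Lemma zeta_sublinear z : sublinear (@zeta R T z).
Proof.
case: z => [||l k|L K]; [exact: Emod_sublinear | exact: Dmax_sublinear |
  exact: dlk_sublinear | exact: DeltaLK_sublinear].
Qed.

End Sublinear.

Section SubmodularApproximation.
Variables (R : realType) (T : finType).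
Implicit Types f g h : {set T} -> R.

Lemma le_supnorm h S : `|h S| <= supnorm h.
Proof. exact: (le_fmax (fun S => `|h S|)). Qed.

Lemma supnorm_ge0 h : 0 <= supnorm h.
Proof. exact: le_trans (le_supnorm h set0). Qed.

Lemma four_term_le_supnorm f g S1 S2 S3 S4 :
  f S1 + f S2 - f S3 - f S4 <=
  g S1 + g S2 - g S3 - g S4 + 4 * supnorm (fun S => g S - f S).
Proof.
set d := supnorm _; have close S : - d <= g S - f S <= d.
  by rewrite -ler_norml; apply: (le_supnorm (fun S => g S - f S)).
move: (close S1) (close S2) (close S3) (close S4).
by move=> /andP[? ?] /andP[? ?] /andP[? ?] /andP[? ?]; lra.
Qed.

Lemma diminishing_returns g A B x : increasing g -> submodular g ->
  g (A :|: B :|: [set x]) - g (A :|: B) <= g (A :|: [set x]) - g A.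
Proof.
move=> incg subg; have := subg (A :|: B) (A :|: [set x]).
have -> : (A :|: B) :|: (A :|: [set x]) = A :|: B :|: [set x].
  by rewrite setUACA setUid setUA.
have : g A <= g ((A :|: B) :&: (A :|: [set x])).
  by apply: incg; rewrite subsetI !subsetUl.
lra.
Qed.

Section Bounds.
Variables f g : {set T} -> R.
Hypotheses (incg : increasing g) (subg : submodular g).

Lemma Emod_le_supnorm : Emod f <= 4 * supnorm (fun S => g S - f S).
Proof.
apply: fmax_le => [|[A B] _ /=]; first by rewrite mulr_ge0 ?supnorm_ge0.
have := four_term_le_supnorm f g (A :|: B) (A :&: B) A B.
by have := subg A B; lra.
Qed.

Lemma dlk_le_supnorm l k : dlk l k f <= 4 * supnorm (fun S => g S - f S).
Proof.
apply: fmax_le => [|[[A B] x] _ /=]; first by rewrite mulr_ge0 ?supnorm_ge0.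
have := four_term_le_supnorm f g (A :|: B :|: [set x]) A (A :|: B) (A :|: [set x]).
by have := diminishing_returns A B x incg subg; lra.
Qed.

Lemma Dmax_le_supnorm : Dmax f <= 4 * supnorm (fun S => g S - f S).
Proof.
apply: fmax_le => [|lk _]; first by rewrite mulr_ge0 ?supnorm_ge0.
exact: dlk_le_supnorm.
Qed.

Lemma zeta_le_supnorm z :
  not_Delta z -> zeta z f <= 4 * supnorm (fun S => g S - f S).
Proof.
case: z => // [_|_|l k _]; [exact: Emod_le_supnorm | exact: Dmax_le_supnorm |
  exact: dlk_le_supnorm].
Qed.

End Bounds.

End SubmodularApproximation.

Theorem mainTheorem1 (R : realType) (T : finType) (z : zeta_choice) :
  zeta_valid T z ->
  (* (i) sublinearity on F_+ *)
  (forall f1 f2 : {set T} -> R,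
      nonnegf f1 -> increasing f1 -> nonnegf f2 -> increasing f2 ->
      zeta z (fun S => f1 S + f2 S) <= zeta z f1 + zeta z f2) /\
  (forall (f : {set T} -> R) (a : R),
      nonnegf f -> increasing f -> 0 <= a ->
      a * zeta z f = zeta z (fun S => a * f S)) /\
  (* (ii) for cases (I), (II), (III) *)
  (not_Delta z ->
   forall f : {set T} -> R,
     nonnegf f -> increasing f -> ~ submodular f ->
     forall eps : R, 0 <= eps -> eps < zeta z f ->
     ~ (exists g : {set T} -> R,
          [/\ nonnegf g, increasing g, submodular g &
              supnorm (fun S => g S - f S) < eps / 4])).
Proof.
move=> _; have [zeta_subadd zeta_homog] := zeta_sublinear R T z.
split; [by move=> f1 f2 *; apply: zeta_subadd | split].
  by move=> f a _ _ a0; apply: zeta_homog.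
move=> nD f _ _ _ eps _ eps_lt [g [_ incg subg dist_lt]].
have := zeta_le_supnorm f incg subg nD.
lra.
Qed.
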